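(* Let $g\ge1$, $n\ge3$ and $x\in A_g^n$. Then: \begin{enumerate} \item $1/g>x_1\ge x_n>0$; \item for no $k\in\{1,\dots,n-1\}$ do $x_k=x_{k+1}$ and $x_1\cdots x_k=g(x_{k+1}+\dots+x_n)$ hold simultaneously; \item if for some $1\le k\le n-1$ the equality $x_1\cdots x_i=g(x_{i+1}+\dots+x_n)$ holds for all $i\le k$, then $x_i=1/s_{g,i}$ for all $i=1,\dots,k$. \end{enumerate}
   Context: For $g,n\ge1$, $A_g^n\subseteq\mathbb{R}^n$ is the set of $(x_1,\dots,x_n)$ with (A1) $x_1\ge\dots\ge x_n\ge0$; (A2) $x_1+\dots+x_n=1/g$; (A3) $x_1\cdots x_k\le g(x_{k+1}+\dots+x_n)$ for all $k=1,\dots,n-1$. Sylvester sequence: $s_{g,1}=g+1$, $s_{g,k+1}=s_{g,k}(s_{g,k}-1)+1$. *)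

From Stdlib Require Import Reals Lra Lia.
Open Scope R_scope.

(* Points of R^n are represented as x : nat -> R, using the 1-based
   coordinates x 1, ..., x n (values at other indices are irrelevant). *)

Fixpoint prodx (x : nat -> R) (k : nat) : R :=
  match k with
  | O => 1
  | S k' => prodx x k' * x (S k')
  end.

Fixpoint sumx (x : nat -> R) (k : nat) : R :=
  match k with
  | O => 0
  | S k' => sumx x k' + x (S k')
  end.

Definition tailsum (x : nat -> R) (k n : nat) : R := sumx x n - sumx x k.

Definition in_A (g n : nat) (x : nat -> R) : Prop :=
  (forall i, (1 <= i < n)%nat -> x i >= x (S i)) /\ x n >= 0 /\
  sumx x n = / INR g /\
  (forall k, (1 <= k <= n - 1)%nat -> prodx x k <= INR g * tailsum x k n).

(* Sylvester sequence s_{g,k}, k >= 1; sylv g 0 is an unused dummy value. *)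
Fixpoint sylv (g k : nat) : nat :=
  match k with
  | O => 0
  | S O => g + 1
  | S k' => let s := sylv g k' in s * (s - 1) + 1
  end.

From Stdlib Require Import Reals Lra Lia Psatz.
Open Scope R_scope.

Section SumsAndProducts.

Variable x : nat -> R.

Lemma sumx_le_of_nonneg k m : (k <= m)%nat ->
  (forall j, (k < j <= m)%nat -> 0 <= x j) -> sumx x k <= sumx x m.
Proof.
  intros Hkm Hnn; induction m as [|m IH].
  - replace k with 0%nat by lia; lra.
  - destruct (Nat.eq_dec k (S m)) as [->|Hne]; [lra|].
    simpl; assert (0 <= x (S m)) by (apply Hnn; lia).
    assert (sumx x k <= sumx x m) by (apply IH; [lia | intros; apply Hnn; lia]).
    lra.
Qed.

Lemma sumx_eq_of_zero k m : (k <= m)%nat ->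
  (forall j, (k < j <= m)%nat -> x j = 0) -> sumx x m = sumx x k.
Proof.
  intros Hkm Hz; induction m as [|m IH].
  - replace k with 0%nat by lia; reflexivity.
  - destruct (Nat.eq_dec k (S m)) as [->|Hne]; [reflexivity|].
    simpl; rewrite Hz, IH by (lia || (intros; apply Hz; lia)); ring.
Qed.

Lemma tailsum_succ k n : tailsum x k n = x (S k) + tailsum x (S k) n.
Proof. unfold tailsum; simpl; ring. Qed.

Lemma prodx_pos m : (forall j, (1 <= j <= m)%nat -> 0 < x j) -> 0 < prodx x m.
Proof.
  induction m as [|m IH]; intros Hpos; simpl; [lra|].
  apply Rmult_lt_0_compat; [apply IH; intros; apply Hpos; lia | apply Hpos; lia].
Qed.

Lemma prodx_nonneg m : (forall j, (1 <= j <= m)%nat -> 0 <= x j) -> 0 <= prodx x m.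
Proof.
  induction m as [|m IH]; intros Hnn; simpl; [lra|].
  apply Rmult_le_pos; [apply IH; intros; apply Hnn; lia | apply Hnn; lia].
Qed.

Lemma prodx_le_first m : (1 <= m)%nat ->
  (forall j, (1 <= j <= m)%nat -> 0 <= x j <= 1) -> prodx x m <= x 1%nat.
Proof.
  induction m as [|m IH]; intros Hm Hunit; [lia|].
  destruct m as [|m]; [simpl; lra|].
  change (prodx x (S (S m))) with (prodx x (S m) * x (S (S m))).
  assert (0 <= x (S (S m)) <= 1) by (apply Hunit; lia).
  assert (0 <= prodx x (S m)) by (apply prodx_nonneg; intros; apply Hunit; lia).
  assert (prodx x (S m) <= x 1%nat) by (apply IH; [lia | intros; apply Hunit; lia]).
  nra.
Qed.

Lemma consecutive_equalities_step (g : nat) j n :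
  prodx x j = INR g * tailsum x j n ->
  prodx x (S j) = INR g * tailsum x (S j) n ->
  x (S j) * (prodx x j + INR g) = prodx x j.
Proof.
  rewrite tailsum_succ; simpl; intros Hj HSj; lra.
Qed.

End SumsAndProducts.

Lemma INR_g_pos (g : nat) : (1 <= g)%nat -> 0 < INR g.
Proof. intros; apply lt_0_INR; lia. Qed.

(* s_{g,i} >= 1, so the truncated subtraction in its recursion is exact. *)
Lemma sylv_ge1 g i : (1 <= i)%nat -> (1 <= sylv g i)%nat.
Proof.
  induction i as [|i IH]; intros Hi; [lia|].
  destruct i as [|i]; [simpl; lia|].
  change (sylv g (S (S i))) with (sylv g (S i) * (sylv g (S i) - 1) + 1)%nat; lia.
Qed.

Lemma sylv_succ_pred g i : (1 <= i)%nat ->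
  INR (sylv g (S i)) - 1 = INR (sylv g i) * (INR (sylv g i) - 1).
Proof.
  intros Hi; pose proof (sylv_ge1 g i Hi).
  destruct i as [|i]; [lia|].
  change (sylv g (S (S i))) with (sylv g (S i) * (sylv g (S i) - 1) + 1)%nat.
  rewrite plus_INR, mult_INR, minus_INR by lia; simpl; ring.
Qed.

Section SylvesterRecursion.

Variables (g k : nat) (x : nat -> R).
Hypothesis Hg : (1 <= g)%nat.
Hypothesis Hrec : forall j, (j < k)%nat -> x (S j) * (prodx x j + INR g) = prodx x j.

Lemma sylvester_step i : (i < k)%nat ->
  prodx x i * (INR (sylv g (S i)) - 1) = INR g ->
  x (S i) * INR (sylv g (S i)) = 1.
Proof.
  intros Hi HP; pose proof (INR_g_pos g Hg) as Hgpos.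
  assert (Hp0 : prodx x i <> 0) by (intros Z; rewrite Z in HP; lra).
  assert (Hsum : prodx x i + INR g = prodx x i * INR (sylv g (S i)))
    by (rewrite <- HP; ring).
  pose proof (Hrec i Hi) as Hstep; rewrite Hsum in Hstep.
  apply (Rmult_eq_reg_l (prodx x i)); [|exact Hp0].
  rewrite <- Hstep at 2; ring.
Qed.

(* By induction: P_{i+1} (s_{i+2} - 1) = P_i x_{i+1} s_{i+1} (s_{i+1} - 1) = g. *)
Lemma sylvester_products i : (i <= k)%nat ->
  prodx x i * (INR (sylv g (S i)) - 1) = INR g.
Proof.
  induction i as [|i IH]; intros Hi.
  - simpl; rewrite plus_INR; simpl; ring.
  - pose proof (sylvester_step i ltac:(lia) (IH ltac:(lia))) as Hxs.
    rewrite (sylv_succ_pred g (S i)) by lia; simpl prodx.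
    rewrite <- (IH ltac:(lia)).
    transitivity (x (S i) * INR (sylv g (S i)) * (prodx x i * (INR (sylv g (S i)) - 1)));
      [ring | rewrite Hxs; ring].
Qed.

Lemma sylvester_values i : (1 <= i <= k)%nat -> x i = / INR (sylv g i).
Proof.
  intros Hi; destruct i as [|j]; [lia|].
  pose proof (sylvester_step j ltac:(lia) (sylvester_products j ltac:(lia))) as Hxs.
  assert (Hs : INR (sylv g (S j)) <> 0) by (intros Z; rewrite Z in Hxs; lra).
  apply (Rmult_eq_reg_r (INR (sylv g (S j)))); [|exact Hs].
  rewrite Hxs, Rinv_l; [reflexivity | exact Hs].
Qed.

End SylvesterRecursion.

Section PointsOfA.

Variables (g n : nat) (x : nat -> R).
Hypothesis Hg : (1 <= g)%nat.
Hypothesis Hx : in_A g n x.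

Lemma in_A_antitone i j : (1 <= i <= j)%nat -> (j <= n)%nat -> x j <= x i.
Proof.
  destruct Hx as [Hdec _]; intros Hij Hjn.
  induction j as [|j IH]; [lia|].
  destruct (Nat.eq_dec i (S j)) as [->|Hne]; [lra|].
  assert (x j >= x (S j)) by (apply Hdec; lia).
  assert (x j <= x i) by (apply IH; lia).
  lra.
Qed.

Lemma in_A_nonneg i : (1 <= i <= n)%nat -> 0 <= x i.
Proof.
  intros Hi; destruct Hx as [_ [Hn _]].
  assert (x n <= x i) by (apply in_A_antitone; lia).
  lra.
Qed.

(* (A2) is (A3) at k = 0, with equality: P_0 = 1 = g * (1/g). *)
Lemma in_A_equality_at_0 : prodx x 0 = INR g * tailsum x 0 n.
Proof.
  destruct Hx as [_ [_ [Hsum _]]]; pose proof (INR_g_pos g Hg).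
  unfold tailsum; rewrite Hsum; simpl; field; lra.
Qed.

Lemma in_A_product_bound j : (j <= n - 1)%nat -> prodx x j <= INR g * tailsum x j n.
Proof.
  intros Hj; destruct j as [|j].
  - rewrite in_A_equality_at_0; lra.
  - destruct Hx as [_ [_ [_ HA3]]]; apply HA3; lia.
Qed.

(* All coordinates are positive: if x_1, ..., x_k > 0 but x_{k+1} = 0, then
   T_k = 0 by monotonicity while P_k > 0, contradicting (A3) at k. *)
Lemma in_A_pos i : (1 <= i <= n)%nat -> 0 < x i.
Proof.
  enough (Hall : forall k, (k <= n)%nat -> forall j, (1 <= j <= k)%nat -> 0 < x j)
    by (intros Hi; apply (Hall n); lia).
  induction k as [|k IH]; intros Hk j Hj; [lia|].
  destruct (Nat.eq_dec j (S k)) as [->|Hne]; [|apply IH; lia].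
  destruct (Rle_lt_dec (x (S k)) 0) as [Hle|]; [exfalso|assumption].
  assert (Hzero : forall l, (k < l <= n)%nat -> x l = 0).
  { intros l Hl; assert (x l <= x (S k)) by (apply in_A_antitone; lia).
    assert (0 <= x l) by (apply in_A_nonneg; lia). lra. }
  assert (Htail : tailsum x k n = 0)
    by (unfold tailsum; rewrite (sumx_eq_of_zero x k n) by (lia || exact Hzero); ring).
  assert (0 < prodx x k) by (apply prodx_pos; intros; apply IH; lia).
  pose proof (in_A_product_bound k ltac:(lia)).
  rewrite Htail, Rmult_0_r in *; lra.
Qed.

(* x_1 < 1/g: the sum x_1 + ... + x_n = 1/g contains the positive term x_n. *)
Lemma in_A_first_lt : (2 <= n)%nat -> x 1%nat < / INR g.
Proof.
  intros Hn; destruct Hx as [_ [_ [Hsum _]]]; rewrite <- Hsum.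
  replace n with (S (n - 1)) at 1 by lia; simpl sumx.
  assert (sumx x 1 <= sumx x (n - 1))
    by (apply sumx_le_of_nonneg; [lia | intros; apply in_A_nonneg; lia]).
  replace (S (n - 1)) with n by lia.
  assert (0 < x n) by (apply in_A_pos; lia).
  simpl in *; lra.
Qed.

Lemma in_A_lt_one i : (2 <= n)%nat -> (1 <= i <= n)%nat -> x i < 1.
Proof.
  intros Hn Hi; pose proof (in_A_first_lt Hn).
  assert (x i <= x 1%nat) by (apply in_A_antitone; lia).
  assert (/ INR g <= 1)
    by (rewrite <- Rinv_1; apply Rinv_le_contravar; [lra | apply (le_INR 1); lia]).
  lra.
Qed.

(* A tie at the last index: x_{n-1} = x_n and P_{n-1} = g x_n force
   P_{n-2} = g, while P_{n-2} <= x_1 < 1 <= g. *)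
Lemma no_tie_last : (3 <= n)%nat ->
  ~ (x (n - 1)%nat = x n /\ prodx x (n - 1) = INR g * tailsum x (n - 1) n).
Proof.
  intros Hn [Htie Heq].
  assert (Htail : tailsum x (n - 1) n = x n)
    by (unfold tailsum; destruct n as [|m]; [lia|];
        replace (S m - 1)%nat with m by lia; simpl; ring).
  rewrite Htail in Heq.
  replace (n - 1)%nat with (S (n - 2)) in Htie, Heq by lia; simpl prodx in Heq.
  rewrite Htie in Heq.
  assert (0 < x n) by (apply in_A_pos; lia).
  assert (Hprod : prodx x (n - 2) = INR g) by (apply (Rmult_eq_reg_r (x n)); lra).
  assert (prodx x (n - 2) <= x 1%nat).
  { apply prodx_le_first; [lia|]; intros j Hj; split;
      [apply in_A_nonneg | apply Rlt_le, in_A_lt_one]; lia. }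
  assert (x 1%nat < 1) by (apply in_A_lt_one; lia).
  assert (1 <= INR g) by (apply (le_INR 1); lia).
  lra.
Qed.

(* A tie at an inner index k = j+1 <= n-2: writing a = x_k = x_{k+1},
   p = P_{k-1}, t = T_k, (A3) at k-1 and k+1 together with p a = g t give
   t <= (a + t) a and t a <= t - a, hence a <= a^2, impossible as 0 < a < 1. *)
Lemma no_tie_inner j : (S (S j) <= n - 1)%nat ->
  ~ (x (S j) = x (S (S j)) /\ prodx x (S j) = INR g * tailsum x (S j) n).
Proof.
  intros Hj [Htie Heq].
  pose proof (in_A_product_bound j ltac:(lia)) as Hbefore.
  pose proof (in_A_product_bound (S (S j)) ltac:(lia)) as Hafter.
  pose proof (tailsum_succ x (S j) n) as Hsplit.
  rewrite tailsum_succ in Hbefore; simpl prodx in Heq, Hafter.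
  rewrite <- Htie in Hafter, Hsplit.
  set (a := x (S j)) in *; set (p := prodx x j) in *;
    set (t := tailsum x (S j) n) in *.
  assert (Ha : 0 < a) by (apply in_A_pos; lia).
  assert (a < 1) by (apply in_A_lt_one; lia).
  pose proof (INR_g_pos g Hg).
  assert (Hlow : t <= (a + t) * a).
  { apply (Rmult_le_reg_l (INR g)); [lra|].
    rewrite <- Rmult_assoc, <- Heq; apply Rmult_le_compat_r; lra. }
  assert (Hhigh : t * a <= t - a).
  { apply (Rmult_le_reg_l (INR g)); [lra|].
    rewrite <- Rmult_assoc, <- Heq; replace (t - a) with (tailsum x (S (S j)) n) by lra.
    exact Hafter. }
  nra.
Qed.

End PointsOfA.

Theorem proposition3p6 (g n : nat) (x : nat -> R) :
  (1 <= g)%nat -> (3 <= n)%nat -> in_A g n x ->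
  (/ INR g > x 1%nat /\ x 1%nat >= x n /\ x n > 0) /\
  (forall k, (1 <= k <= n - 1)%nat ->
     ~ (x k = x (S k) /\ prodx x k = INR g * tailsum x k n)) /\
  (forall k, (1 <= k <= n - 1)%nat ->
     (forall i, (1 <= i <= k)%nat -> prodx x i = INR g * tailsum x i n) ->
     forall i, (1 <= i <= k)%nat -> x i = / INR (sylv g i)).
Proof.
  intros Hg Hn Hx; split; [|split].
  - pose proof (in_A_first_lt g n x Hg Hx ltac:(lia)).
    pose proof (in_A_antitone g n x Hg Hx 1 n ltac:(lia) ltac:(lia)).
    pose proof (in_A_pos g n x Hg Hx n ltac:(lia)).
    lra.
  - intros k Hk.
    destruct (Nat.eq_dec k (n - 1)) as [->|Hne].
    + replace (S (n - 1)) with n by lia; exact (no_tie_last g n x Hg Hx Hn).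
    + destruct k as [|j]; [lia|]; exact (no_tie_inner g n x Hg Hx j ltac:(lia)).
  - intros k Hk Heqs.
    apply (sylvester_values g k x Hg).
    intros j Hj; apply consecutive_equalities_step with (n := n).
    + destruct j as [|j]; [exact (in_A_equality_at_0 g n x Hg Hx) | apply Heqs; lia].
    + apply Heqs; lia.
Qed.
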